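(* Let $s$ and $d$ be positive integers with $s\leqslant d/2$. Then $$ \left(\frac12+\frac1{2^{s+1}}\right)2^d-o(2^d)\leqslant n(d-s,d)\leqslant \left(\frac12+\frac1{2^{s+1}}\right)2^d, $$ where $o(2^d)$ refers to $d\to\infty$ with $s$ fixed. Consequently, for every fixed positive integer $s$, $$ \lim_{d\to\infty}\frac{n(d-s,d)}{2^d}=\frac{2^s+1}{2^{s+1}}. $$
   Context: A box in $\mathbb{R}^d$ is an axis-parallel $d$-dimensional cuboid. For a positive integer $k\leqslant d$, two boxes in $\mathbb{R}^d$ are called $k$-neighborly if their intersection is a box of dimension at least $d-k$ and at most $d-1$. $n(k,d)$ denotes the maximum size of a family of pairwise $k$-neighborly boxes in $\mathbb{R}^d$. *)

From HB Require Import structures.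
From mathcomp Require Import all_boot all_order all_algebra.
From mathcomp Require Import all_classical all_reals all_analysis.
Set Implicit Arguments. Unset Strict Implicit. Unset Printing Implicit Defensive.
Import Order.TTheory GRing.Theory Num.Theory.
Local Open Scope ring_scope.

Record box (R : realType) (d : nat) := Box {
  lo : 'I_d -> R;
  hi : 'I_d -> R;
  lo_lt_hi : forall i, lo i < hi i }.

(* The intersection of two boxes is nonempty iff every coordinate
   interval intersection is nonempty; it is then the box whose i-th
   side is [max lo, min hi]. *)
Definition boxes_meet (R : realType) (d : nat) (B C : box R d) : Prop :=
  forall i, Num.max (lo B i) (lo C i) <= Num.min (hi B i) (hi C i).

Definition inter_dim (R : realType) (d : nat) (B C : box R d) : nat :=
  #|[set i : 'I_d | Num.max (lo B i) (lo C i) < Num.min (hi B i) (hi C i)]|.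

Definition neighborly (R : realType) (k d : nat) (B C : box R d) : Prop :=
  boxes_meet B C /\ (d - k <= inter_dim B C)%N /\ (inter_dim B C <= d - 1)%N.

Definition has_family (R : realType) (k d m : nat) : Prop :=
  exists F : 'I_m -> box R d,
    forall i j : 'I_m, i != j -> @neighborly R k d (F i) (F j).

Definition n_kd (R : realType) (k d : nat) : R :=
  sup [set (m%:R : R) | m in [set m | has_family R k d m]].

From HB Require Import structures.
From mathcomp Require Import all_boot all_order all_algebra.
From mathcomp Require Import all_classical all_reals all_analysis.
From mathcomp Require Import zify ring lra.
Import Order.TTheory GRing.Theory Num.Theory.
Import numFieldNormedType.Exports.
Set Implicit Arguments. Unset Strict Implicit. Unset Printing Implicit Defensive.
Local Open Scope ring_scope.

(* Weigh the vertices v of {0,1}^d by each box B of the family: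
   the weight is a product over the coordinates, equal to 1 for both values at
   a coordinate where B touches no other box, and equal to 2 for the value
   pointing away from the contact (0 if B lies below the contact, 1 if above)
   and 0 for the other value at a coordinate where B does touch; a box cannot
   touch from both sides.  Every box has total weight 2^d.  Two boxes of the
   family meet in a box of dimension < d, so they touch at some coordinate from
   opposite sides and no vertex gets positive weight from two boxes.  For
   antipodal vertices v and v', supported by boxes B and B', the weights add up
   to at most 2^d + 2^(d-s): if B touches on all d coordinates then, on the at
   least s coordinates where B and B' overlap, B' cannot touch, so its weight
   is at most 2^(d-s); otherwise both weights are at most 2^(d-1).  Summing
   over all vertices gives 2 m <= 2^d + 2^(d-s).

   Write d = s + n and r = floor((n-s)/2), and encode the sides
   [0,1], [1,2], [0,2] by 0, 1, *.  The words of {0,1}^s x {0,1}^n with at most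
   r ones in the second block, together with the words of {*}^s x {0,1}^n with
   more than r ones, give pairwise (d-s)-neighborly boxes.  Their number falls
   short of (1/2 + 1/2^(s+1)) 2^d by at most 2^(s-1) s binom(n, n/2), and
   binom(n, n/2) <= 2^(n+1) / sqrt(n+1). *)

Section Overlap.
Variables (R : realType) (d : nat).
Implicit Types B C : box R d.

Definition overlap B C (i : 'I_d) : bool :=
  Num.max (lo B i) (lo C i) < Num.min (hi B i) (hi C i).

Lemma overlapE B C i : overlap B C i = (lo B i < hi C i) && (lo C i < hi B i).
Proof. by rewrite /overlap gt_max !lt_min !lo_lt_hi andbT andbC. Qed.

Lemma overlapC B C i : overlap B C i = overlap C B i.
Proof. by rewrite !overlapE andbC. Qed.

Lemma inter_dimE B C : inter_dim B C = #|[set i | overlap B C i]|.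
Proof. by []. Qed.

End Overlap.

Lemma card_proper_setT (n : nat) (A : {set 'I_n}) :
  A != [set: 'I_n]%SET -> (#|A| <= n.-1)%N.
Proof.
move=> A_neq; have := proper_card (A := A) (B := [set: 'I_n]%SET).
by rewrite properT A_neq cardsT card_ord => /(_ isT); lia.
Qed.

Section UpperBound.
Variables (R : realType) (d m : nat) (F : 'I_m -> box R d).
Implicit Types (j k : 'I_m) (i : 'I_d) (v : {ffun 'I_d -> bool}).
Local Open Scope nat_scope.

Definition touches_lo j i : bool := [exists k, lo (F j) i == hi (F k) i].
Definition touches_hi j i : bool := [exists k, hi (F j) i == lo (F k) i].

Definition touching j : {set 'I_d} := [set i | touches_lo j i || touches_hi j i].

Definition weight j i (b : bool) : nat :=
  if touches_hi j i then (if b then 0 else 2)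
  else if touches_lo j i then (if b then 2 else 0) else 1.

Definition mass j v : nat := \prod_i weight j i (v i).

Definition supports j v : bool := [forall i, weight j i (v i) != 0].

Definition total_mass v : nat := \sum_j mass j v.

Definition antipode v : {ffun 'I_d -> bool} := [ffun i => ~~ v i].

Lemma antipodeK : involutive antipode.
Proof. by move=> v; apply/ffunP => i; rewrite !ffunE negbK. Qed.

Lemma sum_mass j : \sum_v mass j v = 2 ^ d.
Proof.
rewrite /mass -(bigA_distr_bigA (fun i b => weight j i b)) /=.
rewrite (eq_bigr (fun _ => 2)) ?prod_nat_const ?card_ord // => i _.
by rewrite big_bool /weight; case: touches_hi; case: touches_lo.
Qed.

Lemma mass_le_touching j v : mass j v <= 2 ^ #|touching j|.
Proof.
rewrite -prod_nat_const big_mkcond /mass leq_prod // => i _.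
by rewrite /weight inE; case: touches_hi; case: touches_lo; case: (v i).
Qed.

Lemma mass_le j v : mass j v <= 2 ^ d.
Proof.
apply: leq_trans (mass_le_touching j v) _.
by rewrite leq_pexp2l // -[X in _ <= X]card_ord max_card.
Qed.

Lemma mass_eq0 j v : ~~ supports j v -> mass j v = 0.
Proof. by move=> /forallPn[i /negPn/eqP w0]; rewrite /mass (bigD1 i) //= w0. Qed.

Variable s : nat.
Hypotheses (d_gt0 : 0 < d) (s_le_d : s <= d).
Hypothesis F_neighborly : forall j k, j != k -> neighborly (d - s) (F j) (F k).

Lemma lo_le_hi j k i : (lo (F j) i <= hi (F k) i)%R.
Proof.
have [<-|jk] := eqVneq j k; first exact/ltW/lo_lt_hi.
by have [/(_ i)] := F_neighborly jk; rewrite ge_max !le_min => /andP[/andP[]].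
Qed.

Lemma touches_lo_hiF j i : touches_lo j i -> touches_hi j i = false.
Proof.
move=> /existsP[k /eqP lo_j]; apply/negbTE/existsP => -[l /eqP hi_j].
by have := lo_le_hi l k i; rewrite -lo_j -hi_j leNgt lo_lt_hi.
Qed.

Lemma supports_hi j v i : supports j v -> touches_hi j i -> v i = false.
Proof. by move=> /forallP/(_ i) + t_hi; rewrite /weight t_hi; case: (v i). Qed.

Lemma supports_lo j v i : supports j v -> touches_lo j i -> v i = true.
Proof.
move=> /forallP/(_ i) + t_lo; rewrite /weight (touches_lo_hiF t_lo) t_lo.
by case: (v i).
Qed.

Lemma touches_overlapF j k i :
  touches_lo j i -> touches_hi k i -> overlap (F j) (F k) i = false.
Proof.
move=> /existsP[a /eqP lo_j] /existsP[b /eqP hi_k].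
by rewrite overlapE hi_k lo_j ltNge lo_le_hi.
Qed.

Lemma overlapF_touches j k i : ~~ overlap (F j) (F k) i ->
  touches_hi j i && touches_lo k i || touches_lo j i && touches_hi k i.
Proof.
rewrite overlapE negb_and -!leNgt => /orP[] le_hi.
  have e : hi (F k) i = lo (F j) i by apply/le_anti; rewrite le_hi lo_le_hi.
  by apply/orP; right; apply/andP; split; apply/existsP; [exists k|exists j]; rewrite e.
have e : hi (F j) i = lo (F k) i by apply/le_anti; rewrite le_hi lo_le_hi.
by apply/orP; left; apply/andP; split; apply/existsP; [exists k|exists j]; rewrite e.
Qed.

Lemma exists_overlapF j k : j != k -> [exists i, ~~ overlap (F j) (F k) i].
Proof.
move=> jk; have [_ [_]] := F_neighborly jk; apply: contraLR => /existsPn all_ov.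
rewrite inter_dimE -ltnNge.
have -> : [set i | overlap (F j) (F k) i] = [set: 'I_d]%SET.
  by apply/setP => i; rewrite !inE; move: (all_ov i); rewrite negbK.
by rewrite cardsT card_ord; lia.
Qed.

Lemma supports_inj j k v : supports j v -> supports k v -> j = k.
Proof.
move=> sj sk; apply/eqP; apply: contraT => /exists_overlapF/existsP[i].
move=> /overlapF_touches/orP[]/andP[tj tk].
  by have := supports_hi sj tj; rewrite (supports_lo sk tk).
by have := supports_lo sj tj; rewrite (supports_hi sk tk).
Qed.

Lemma total_massE v :
  total_mass v = if [pick j | supports j v] is Some j then mass j v else 0.
Proof.
case: pickP => [j sj|none]; last by apply: big1 => j _; rewrite mass_eq0 ?none.
rewrite /total_mass (bigD1 j) //= big1 ?addn0 // => k kj.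
by apply: mass_eq0; apply: contra kj => sk; rewrite (supports_inj sk sj).
Qed.

Lemma touching_supports_antipode j v :
  supports j v -> supports j (antipode v) -> touching j != [set: 'I_d]%SET.
Proof.
move=> s1 s2; apply/negP => /eqP full.
have : Ordinal d_gt0 \in touching j by rewrite full inE.
rewrite inE => /orP[] t.
  by have := supports_lo s2 t; rewrite ffunE (supports_lo s1 t).
by have := supports_hi s2 t; rewrite ffunE (supports_hi s1 t).
Qed.

Lemma card_touching_le j k v : j != k -> supports j v -> supports k (antipode v) ->
  touching j = [set: 'I_d]%SET -> #|touching k| <= d - s.
Proof.
move=> jk sj sk full; have [_ [s_le _]] := F_neighborly jk.
have sub : [set i | overlap (F j) (F k) i] \subset ~: touching k.
  apply/fintype.subsetP => i; rewrite !inE => ov; apply/negP.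
  have : i \in touching j by rewrite full inE.
  rewrite !inE => /orP[] tj /orP[] tk.
  - by have := supports_lo sk tk; rewrite ffunE (supports_lo sj tj).
  - by rewrite touches_overlapF in ov.
  - by rewrite overlapC touches_overlapF in ov.
  - by have := supports_hi sk tk; rewrite ffunE (supports_hi sj tj).
have := cardsC (touching k); have := subset_leq_card sub; rewrite -inter_dimE card_ord.
move: s_le; set dim := inter_dim _ _; set untouched := #|~: touching k|; lia.
Qed.

Lemma mass_antipode_le_full j k v : supports j v -> supports k (antipode v) ->
  touching j = [set: 'I_d]%SET -> mass j v + mass k (antipode v) <= 2 ^ d + 2 ^ (d - s).
Proof.
move=> sj sk full; have jk : j != k.
  apply/eqP => ejk; rewrite -ejk in sk.
  by have := touching_supports_antipode sj sk; rewrite full eqxx.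
rewrite leq_add ?mass_le // (leq_trans (mass_le_touching _ _)) // leq_pexp2l //.
exact: card_touching_le sk full.
Qed.

Lemma mass_antipode_le j k v : supports j v -> supports k (antipode v) ->
  mass j v + mass k (antipode v) <= 2 ^ d + 2 ^ (d - s).
Proof.
move=> sj sk; have [full_j|part_j] := eqVneq (touching j) [set: 'I_d]%SET.
  exact: mass_antipode_le_full.
have [full_k|part_k] := eqVneq (touching k) [set: 'I_d]%SET.
  by rewrite addnC -{2}(antipodeK v) mass_antipode_le_full ?antipodeK.
have half l : touching l != [set: 'I_d]%SET -> forall w, mass l w <= 2 ^ d.-1.
  move=> part w; apply: leq_trans (mass_le_touching l w) _.
  by rewrite leq_pexp2l // card_proper_setT.
have := half _ part_j v; have := half _ part_k (antipode v).
have : 2 ^ d = 2 ^ d.-1 + 2 ^ d.-1 by rewrite -{1}(prednK d_gt0) expnS mul2n addnn.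
lia.
Qed.

Lemma total_mass_antipode_le v :
  total_mass v + total_mass (antipode v) <= 2 ^ d + 2 ^ (d - s).
Proof.
rewrite !total_massE; case: pickP => [j sj|_]; case: pickP => [k sk|_].
- exact: mass_antipode_le.
- by rewrite addn0 (leq_trans (mass_le _ _)) ?leq_addr.
- by rewrite (leq_trans (mass_le _ _)) ?leq_addr.
- by [].
Qed.

Lemma family_size_le : 2 * m <= 2 ^ d + 2 ^ (d - s).
Proof.
have sum_total : \sum_v total_mass v = m * 2 ^ d.
  rewrite /total_mass exchange_big /= (eq_bigr (fun _ => 2 ^ d)) => [|j _].
    by rewrite sum_nat_const card_ord.
  exact: sum_mass.
have sum_antipode : \sum_v total_mass (antipode v) = \sum_v total_mass v.
  by rewrite [RHS](reindex_inj (can_inj antipodeK)).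
have : \sum_v (total_mass v + total_mass (antipode v)) <=
       \sum_(v : {ffun 'I_d -> bool}) (2 ^ d + 2 ^ (d - s)).
  by apply: leq_sum => v _; exact: total_mass_antipode_le.
rewrite big_split /= sum_antipode sum_total sum_nat_const card_ffun card_bool.
rewrite card_ord => le2; rewrite -(@leq_pmul2l (2 ^ d)) ?expn_gt0 //.
by apply: leq_trans le2; rewrite mulnCA mul2n -addnn mulnC.
Qed.

End UpperBound.

Definition density (R : realType) (s : nat) : R := 1 / 2 + 1 / 2 ^+ s.+1.

Lemma has_family_size_le (R : realType) (s d m : nat) : (0 < d)%N -> (s <= d)%N ->
  has_family R (d - s) d m -> m%:R <= density R s * 2 ^+ d.
Proof.
move=> d_gt0 s_le_d [F F_nb].
have := family_size_le d_gt0 s_le_d F_nb; rewrite -(ler_nat R) natrM natrD !natrX.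
have -> : 2 ^+ d + 2 ^+ (d - s) = 2 * (density R s * 2 ^+ d) :> R.
  rewrite -(subnKC s_le_d) addKn exprD /density exprS; field; exact: expf_neq0.
by rewrite ler_pM2l.
Qed.

Section WordBoxes.
Variables (R : realType) (d : nat).
Implicit Types (o : option bool) (u w : 'I_d -> option bool).

(* [Some false], [Some true] and [None] encode the sides [0,1], [1,2], [0,2]. *)
Definition side_lo o : R := if o == Some true then 1 else 0.
Definition side_hi o : R := if o == Some false then 1 else 2.

Lemma side_lo_lt_hi o : side_lo o < side_hi o.
Proof. by case: o => [[]|]; rewrite /side_lo /side_hi /=; lra. Qed.

Definition word_box w : box R d := Box (fun i => side_lo_lt_hi (w i)).

Definition opposite (a b : option bool) : bool :=
  (a == Some true) && (b == Some false) || (a == Some false) && (b == Some true).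

Lemma overlap_word_box u w i :
  overlap (word_box u) (word_box w) i = ~~ opposite (u i) (w i).
Proof.
rewrite overlapE /= /side_lo /side_hi /opposite.
by case: (u i) => [[]|]; case: (w i) => [[]|] /=; apply/idP/idP; lra.
Qed.

Lemma word_boxes_meet u w : boxes_meet (word_box u) (word_box w).
Proof.
move=> i; rewrite ge_max !le_min /= /side_lo /side_hi.
by case: (u i) => [[]|]; case: (w i) => [[]|] /=;
  apply/andP; split; apply/andP; split; lra.
Qed.

Lemma neighborly_word_box s u w : (s <= d)%N ->
  (exists i, opposite (u i) (w i)) -> (s <= #|[set i | ~~ opposite (u i) (w i)]|)%N ->
  neighborly (d - s) (word_box u) (word_box w).
Proof.
move=> s_le_d [i opp_i] card_le; split; first exact: word_boxes_meet.
have dimE : inter_dim (word_box u) (word_box w) = #|[set i | ~~ opposite (u i) (w i)]|.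
  by rewrite inter_dimE; apply: eq_card => j; rewrite !inE overlap_word_box.
rewrite dimE subKn //; split=> //; rewrite subn1 card_proper_setT //.
by apply/negP => /eqP/setP/(_ i); rewrite !inE opp_i.
Qed.

End WordBoxes.

Lemma oppositeC a b : opposite a b = opposite b a.
Proof. by case: a => [[]|]; case: b => [[]|]. Qed.

Lemma opposite_Some (x y : bool) : opposite (Some x) (Some y) = (x != y).
Proof. by case: x; case: y. Qed.

Lemma opposite_None a : opposite None a = false.
Proof. by case: a => [[]|]. Qed.

Lemma exists_mem_neq (T : finType) (A B : {set T}) :
  A != B -> exists x, (x \in A) != (x \in B).
Proof.
move=> AB; apply/existsP; apply: contraNT AB => /existsPn AB.
by apply/eqP/setP => x; move: (AB x); rewrite negbK => /eqP.
Qed.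

Lemma exists_mem_card_lt (T : finType) (A B : {set T}) :
  (#|A| < #|B|)%N -> exists x, (x \in B) && (x \notin A).
Proof.
move=> AB; apply/existsP; move: AB; apply: contraTT => /existsPn BA.
rewrite -leqNgt subset_leq_card //; apply/fintype.subsetP => x xB.
by move: (BA x); rewrite xB negbK.
Qed.

Lemma card_set_of (T : finType) : #|{set T}| = (2 ^ #|T|)%N.
Proof. by rewrite -[LHS](cardsT {set T}) -powersetT card_powerset cardsT. Qed.

Section Codes.
Variables s n : nat.
Local Open Scope nat_scope.

(* A code [(Some X, Y)] is the vertex with ones at [X] and at [Y] (shifted by
   [s]); a code [(None, Y)] has [*] on its first [s] coordinates. *)
Definition code := (option {set 'I_s} * {set 'I_n})%type.
Implicit Types p q : code.

Definition code_word p (i : 'I_(s + n)) : option bool :=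
  match fintype.split i with
  | inl a => omap (fun X : {set 'I_s} => a \in X) p.1
  | inr b => Some (b \in p.2)
  end.

Definition admissible r p : bool := if p.1 is Some _ then #|p.2| <= r else r < #|p.2|.

Lemma code_word_lshift p a :
  code_word p (lshift n a) = omap (fun X : {set 'I_s} => a \in X) p.1.
Proof. by rewrite /code_word (unsplitK (inl _ a) : fintype.split (lshift n a) = inl a). Qed.

Lemma code_word_rshift p b : code_word p (rshift s b) = Some (b \in p.2).
Proof. by rewrite /code_word (unsplitK (inr _ b) : fintype.split (rshift s b) = inr b). Qed.

Lemma opposite_code_word r p q : p != q -> admissible r p -> admissible r q ->
  exists i, opposite (code_word p i) (code_word q i).
Proof.
have opp_r b (Y Y' : {set 'I_n}) (o o' : option {set 'I_s}) : (b \in Y) != (b \in Y') ->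
    exists i, opposite (code_word (o, Y) i) (code_word (o', Y') i).
  by exists (rshift s b); rewrite !code_word_rshift opposite_Some.
case: p q => [[X|] Y] [[X'|] Y']; rewrite /admissible /= => pq adm_p adm_q.
- have [eXX'|XX'] := eqVneq X X'.
    subst X'; have [b] : exists b : 'I_n, (b \in Y) != (b \in Y').
      by apply: exists_mem_neq; apply: contraNneq pq => ->.
    exact: opp_r.
  have [a opp_a] := exists_mem_neq XX'.
  by exists (lshift n a); rewrite !code_word_lshift opposite_Some.
- have [b /andP[bY' bY]] := exists_mem_card_lt (leq_ltn_trans adm_p adm_q).
  by apply: (opp_r b); rewrite bY' (negbTE bY).
- have [b /andP[bY bY']] := exists_mem_card_lt (leq_ltn_trans adm_q adm_p).
  by apply: (opp_r b); rewrite bY (negbTE bY').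
- have [b] : exists b : 'I_n, (b \in Y) != (b \in Y').
    by apply: exists_mem_neq; apply: contraNneq pq => ->.
  exact: opp_r.
Qed.

Lemma card_nonopposite_None p q : (p.1 == None) || (q.1 == None) ->
  s <= #|[set i | ~~ opposite (code_word p i) (code_word q i)]|.
Proof.
move=> none; have sub : lshift n @: [set: 'I_s]%SET \subset
    [set i | ~~ opposite (code_word p i) (code_word q i)].
  apply/fintype.subsetP => _ /imsetP[a _ ->]; rewrite inE !code_word_lshift.
  by case/orP: none => /eqP -> /=; rewrite ?opposite_None // oppositeC opposite_None.
apply: leq_trans (subset_leq_card sub).
by rewrite card_imset ?cardsT ?card_ord //; exact: lshift_inj.
Qed.

(* Two codes with known first block agree, outside the at most [2 r] ones of
   their second blocks, on at least [n - 2 r >= s] zeros. *)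
Lemma card_nonopposite_code_word r p q : 2 * r + s <= n ->
  admissible r p -> admissible r q ->
  s <= #|[set i | ~~ opposite (code_word p i) (code_word q i)]|.
Proof.
move=> r_small; case: p q => [[X|] Y] [[X'|] Y'];
  rewrite /admissible /= => adm_p adm_q; last 3 first.
- by apply: card_nonopposite_None; rewrite eqxx orbT.
- by apply: card_nonopposite_None; rewrite eqxx.
- by apply: card_nonopposite_None; rewrite eqxx.
set Z := ~: (Y :|: Y').
have sub : @rshift s n @: Z \subset
    [set i | ~~ opposite (code_word (Some X, Y) i) (code_word (Some X', Y') i)].
  apply/fintype.subsetP => i /imsetP[b]; rewrite !inE negb_or => /andP[bY bY'] ->.
  by rewrite !code_word_rshift opposite_Some (negbTE bY) (negbTE bY').
apply: leq_trans (subset_leq_card sub); rewrite card_imset; last exact: rshift_inj.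
have := cardsC (Y :|: Y'); have := cardsU Y Y'; rewrite card_ord -/Z.
move: adm_p adm_q; set cY := #|Y|; set cY' := #|Y'|; set cU := #|Y :|: Y'|.
set cI := #|Y :&: Y'|; set cZ := #|Z|; lia.
Qed.

Definition low_sets : {set {set 'I_n}} := [set Y : {set 'I_n} | #|Y| <= (n - s)./2].

Definition low_codes := finset.setX [set: {set 'I_s}]%SET low_sets.

Definition code_count : nat := #|low_codes| + #|~: low_sets|.

Definition index_code (x : 'I_#|low_codes| + 'I_#|~: low_sets|) : code :=
  match x with
  | inl a => (Some (enum_val a).1, (enum_val a).2)
  | inr b => (None, enum_val b)
  end.

Lemma index_code_inj : injective index_code.
Proof.
move=> [a|a] [b|b] //= [].
- move=> e1 e2; congr inl; apply: enum_val_inj.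
  by rewrite [enum_val a]surjective_pairing [enum_val b]surjective_pairing e1 e2.
- by move=> e; congr inr; apply: enum_val_inj.
Qed.

Lemma index_code_admissible x : admissible ((n - s)./2) (index_code x).
Proof.
case: x => [a|b]; rewrite /admissible /=.
  by case: (enum_val a) (enum_valP a) => X Y; rewrite finset.in_setX !inE.
by have := enum_valP b; rewrite !inE ltnNge.
Qed.

Lemma code_countE : code_count = 2 ^ s * #|low_sets| + (2 ^ n - #|low_sets|).
Proof.
rewrite /code_count /low_codes cardsX cardsT [#|~: _|]cardsCs finset.setCK.
by rewrite !card_set_of !card_ord.
Qed.

Lemma has_family_codes (R : realType) : s <= n ->
  has_family R (s + n - s) (s + n) code_count.
Proof.
move=> s_le_n; exists (fun x => word_box R (code_word (index_code (fintype.split x)))).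
move=> x y xy; have pq : index_code (fintype.split x) != index_code (fintype.split y).
  by apply: contraNneq xy => /index_code_inj/(can_inj splitK) ->.
apply: neighborly_word_box; first exact: leq_addr.
  exact: opposite_code_word pq (index_code_admissible _) (index_code_admissible _).
apply: card_nonopposite_code_word (index_code_admissible _) (index_code_admissible _).
by have := odd_double_half (n - s); rewrite -addnn; lia.
Qed.

End Codes.

Section Binomial.
Local Open Scope nat_scope.

Lemma leq_bin_succ n k : 2 * k.+1 <= n -> 'C(n, k) <= 'C(n, k.+1).
Proof.
move=> k_small; rewrite -(@leq_pmul2l k.+1) // mul_bin_left.
by apply: leq_mul => //; lia.
Qed.

Lemma leq_bin_half n k h : k <= h -> 2 * h <= n -> 'C(n, k) <= 'C(n, h).
Proof.
elim: h => [|h IH] kh h_small; first by move: kh; rewrite leqn0 => /eqP ->.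
move: kh; rewrite leq_eqVlt => /orP[/eqP->//|kh].
by apply: leq_trans (IH kh _) (leq_bin_succ h_small); lia.
Qed.

Lemma leq_bin_mid n k : 'C(n, k) <= 'C(n, n./2).
Proof.
have n_half := odd_double_half n; rewrite -addnn in n_half.
have [k_le|k_gt] := leqP k n./2; first by apply: leq_bin_half => //; lia.
have [k_le_n|k_gt_n] := leqP k n; last by rewrite bin_small.
by rewrite -bin_sub //; apply: leq_bin_half => //; lia.
Qed.

Lemma central_bin_step m : m.+1 * 'C(m.+1.*2, m.+1) = 2 * m.*2.+1 * 'C(m.*2, m).
Proof.
have e1 := mul_bin_diag m.+1.*2 m; have e2 := mul_bin_down m.*2.+1 m.
rewrite doubleS /= in e1 e2 *; rewrite -e1 -mulnA e2.
have -> : m.*2.+1 - m = m.+1 by rewrite -addnn; lia.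
set B := 'C(_, _); rewrite -addnn; nia.
Qed.

Lemma central_bin_sq_le m : 'C(m.*2, m) ^ 2 * m.*2.+1 <= 16 ^ m.
Proof.
elim: m => [|m IH]; first by rewrite bin0.
have step := central_bin_step m; move: IH step.
set A := 'C(m.*2, m); set B := 'C(m.+1.*2, m.+1) => IH step.
rewrite -(@leq_pmul2l (m.+1 ^ 2)) ?expn_gt0 //.
have -> : m.+1 ^ 2 * (B ^ 2 * (m.+1.*2).+1) =
          4 * (m.*2.+1 * m.*2.+3) * (A ^ 2 * m.*2.+1).
  rewrite mulnA -expnMn step doubleS -!addnn; nia.
have le4 : m.*2.+1 * m.*2.+3 <= 4 * m.+1 ^ 2 by rewrite -addnn; nia.
apply: leq_trans (leq_mul (leq_mul (leqnn 4) le4) IH) _.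
by rewrite [16 ^ m.+1]expnS; apply/eq_leq; ring.
Qed.

Lemma bin_sq_le_even m k : 'C(m.*2, k) ^ 2 * m.*2.+1 <= 16 ^ m.
Proof.
apply: leq_trans (central_bin_sq_le m); rewrite leq_mul // leq_exp2r //.
by have := leq_bin_mid m.*2 k; rewrite doubleK.
Qed.

Lemma bin_sq_le n k : 'C(n, k) ^ 2 * n.+1 <= 4 * 4 ^ n.
Proof.
have sixteen j : 16 ^ j = 4 ^ j.*2 by rewrite -mul2n expnM.
have := odd_double_half n; set m := n./2.
case: (odd n); rewrite ?add0n ?add1n => n_eq; last first.
  by rewrite -n_eq -sixteen (leq_trans (bin_sq_le_even m k)) // leq_pmull.
have n1 : n.+1 = m.+1.*2 by rewrite doubleS n_eq.
apply: (@leq_trans ('C(n.+1, k.+1) ^ 2 * n.+1)).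
  by rewrite leq_mul // leq_exp2r // binS leq_addl.
rewrite -expnS n1 -sixteen (leq_trans _ (bin_sq_le_even _ k.+1)) //.
by rewrite leq_mul ?leqnSn.
Qed.

End Binomial.

Section LowSets.
Local Open Scope nat_scope.

Lemma card_sets_window n a w :
  #|[set Y : {set 'I_n} | a <= #|Y| < a + w]| <= w * 'C(n, n./2).
Proof.
elim: w => [|w IH].
  by rewrite leqn0 cards_eq0; apply/eqP/setP => Y; rewrite !inE addn0 ltnNge andbN.
have sub : [set Y : {set 'I_n} | a <= #|Y| < a + w.+1] \subset
    [set Y : {set 'I_n} | a <= #|Y| < a + w] :|: [set Y : {set 'I_n} | #|Y| == a + w].
  apply/fintype.subsetP => Y; rewrite !inE addnS ltnS => /andP[-> /=].
  by rewrite leq_eqVlt orbC.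
apply: leq_trans (subset_leq_card sub) _; rewrite cardsU.
apply: leq_trans (leq_subr _ _) _.
by rewrite mulSn addnC leq_add // card_draws card_ord leq_bin_mid.
Qed.

(* Complementation maps the low sets onto the sets with at least [n - r]
   elements; what is left over are the sets of the at most [s] middle sizes. *)
Lemma low_sets_bounds s n : 0 < s -> s <= n ->
  2 * #|low_sets s n| <= 2 ^ n <= 2 * #|low_sets s n| + s * 'C(n, n./2).
Proof.
move=> s_gt0 s_le_n; set r := (n - s)./2; set L := low_sets s n.
have r_eq : odd (n - s) + (r + r) = n - s by rewrite addnn odd_double_half.
set H := [set Y : {set 'I_n} | n - r <= #|Y|].
have card_H : #|H| = #|L|.
  have -> : H = [set ~: Y | Y in L].
    apply/setP => Z; rewrite inE; apply/idP/imsetP => [Z_big|[Y]].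
      exists (~: Z); last by rewrite finset.setCK.
      by rewrite inE; have := cardsC Z; rewrite card_ord; lia.
    by rewrite inE => Y_small ->; have := cardsC Y; rewrite card_ord; lia.
  by rewrite card_imset //; exact: finset.setC_inj.
have card_L : #|L| + #|~: L| = 2 ^ n by rewrite cardsC card_set_of card_ord.
have H_sub : H \subset ~: L.
  by apply/fintype.subsetP => Y; rewrite !inE; lia.
have L_sub : ~: L \subset H :|: [set Y : {set 'I_n} | r.+1 <= #|Y| < r.+1 + (n - r - r.+1)].
  by apply/fintype.subsetP => Y; rewrite !inE -ltnNge; lia.
have := subset_leq_card H_sub; have := subset_leq_card L_sub; rewrite cardsU.
have := card_sets_window n r.+1 (n - r - r.+1).
have : (n - r - r.+1) * 'C(n, n./2) <= s * 'C(n, n./2) by rewrite leq_mul2r; lia.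
move: card_H card_L; set W := #|[set Y : {set 'I_n} | _ <= #|Y| < _]|.
set HW := #|H :&: _|; set cL := #|L|; set cH := #|H|; set cL' := #|~: L|; lia.
Qed.

End LowSets.

Local Open Scope classical_set_scope.
Local Open Scope ring_scope.

Definition lower_error (R : realType) (s d : nat) : R :=
  density R s * 2 ^+ d - (code_count s (d - s))%:R.

Lemma lower_error_bound (R : realType) (s d : nat) : (0 < s)%N -> (2 * s <= d)%N ->
  0 <= lower_error R s d / 2 ^+ d <=
  s%:R / 2 * ('C(d - s, (d - s)./2)%:R / 2 ^+ (d - s)).
Proof.
move=> s_gt0 sd; have [n d_eq] : exists n, d = (s + n)%N by exists (d - s)%N; lia.
subst d; have s_le_n : (s <= n)%N by lia.
have /andP[lowL lowU] := low_sets_bounds s_gt0 s_le_n.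
have L_le : (#|low_sets s n| <= 2 ^ n)%N by lia.
rewrite /lower_error addKn code_countE natrD natrM natrB // !natrX.
move: lowL lowU; rewrite -!(ler_nat R) !natrD !natrM natrX.
set L : R := #|_|%:R; set C : R := 'C(n, _)%:R => lowL lowU.
have P_ge1 : 1 <= 2 ^+ s :> R by rewrite exprn_ege1 // ler1n.
have Q_gt0 : 0 < 2 ^+ n :> R by rewrite exprn_gt0.
set P : R := 2 ^+ s in P_ge1 *; set Q : R := 2 ^+ n in Q_gt0 lowL lowU *.
have P_gt0 : 0 < P by apply: lt_le_trans P_ge1.
have -> : (density R s * 2 ^+ (s + n) - (P * L + (Q - L))) / 2 ^+ (s + n) =
          (1 - P^-1) * ((Q - 2 * L) / (2 * Q)).
  by rewrite /density exprD exprS -/P -/Q; field; rewrite !gt_eqF.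
have -> : s%:R / 2 * (C / Q) = s%:R * C / (2 * Q) by field; rewrite gt_eqF.
have num_ge0 : 0 <= Q - 2 * L by lra.
have frac_ge0 : 0 <= (Q - 2 * L) / (2 * Q) by rewrite divr_ge0 // mulr_ge0 // ltW.
have c_ge0 : 0 <= 1 - P^-1 by rewrite subr_ge0 invr_le1 ?unitfE ?gt_eqF.
have c_le1 : 1 - P^-1 <= 1 by rewrite lerBlDr lerDl invr_ge0 ltW.
rewrite mulr_ge0 //= -[X in _ <= X]mul1r ler_pM //.
by rewrite ler_pM2r ?invr_gt0 ?mulr_gt0 //; lra.
Qed.

Lemma mid_bin_ratio_cvg0 (R : realType) :
  (fun n => 'C(n, n./2)%:R / 2 ^+ n : R) @ \oo --> 0.
Proof.
apply/cvgrPdist_lt => e e_gt0.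
have N_gt := archi_boundP (_ : 0 <= 4 / e ^+ 2); set N := Num.bound _ in N_gt.
have {}N_gt := N_gt (divr_ge0 (ler0n _ 4) (sqr_ge0 e)).
exists N => // n /= N_le_n; rewrite sub0r normrN.
have Q_gt0 : 0 < 2 ^+ n :> R by rewrite exprn_gt0.
set x := _ / _; have x_ge0 : 0 <= x by rewrite divr_ge0 ?ler0n ?ltW.
rewrite ger0_norm // -(@ltr_pXn2r _ 2%N) ?nnegrE ?(ltW e_gt0) //.
have sq_le : x ^+ 2 * n.+1%:R <= 4.
  rewrite expr_div_n mulrAC ler_pdivrMr ?exprn_gt0 //.
  have pow4 : ((2 ^ n) ^ 2 = 4 ^ n)%N by rewrite -expnM mulnC expnM.
  by rewrite -!natrX -!natrM ler_nat pow4 bin_sq_le.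
rewrite -(ltr_pM2r (ltr0Sn R n)); apply: le_lt_trans sq_le _.
rewrite -ltr_pdivrMl ?exprn_gt0 // mulrC; apply: lt_le_trans N_gt _.
by rewrite ler_nat; lia.
Qed.

Lemma lower_error_cvg0 (R : realType) (s : nat) : (0 < s)%N ->
  (fun d => lower_error R s d / 2 ^+ d) @ \oo --> 0.
Proof.
move=> s_gt0.
apply: (@squeeze_cvgr _ _ _ _ (fun=> 0)
  (fun d => s%:R / 2 * ('C(d - s, (d - s)./2)%:R / 2 ^+ (d - s)))).
- by exists (2 * s)%N => // d /= sd; exact: lower_error_bound.
- exact: cvg_cst.
- rewrite -(mulr0 (s%:R / 2)); apply: cvgMl_tmp.
  by have := @mid_bin_ratio_cvg0 R; rewrite -(cvg_centern s).
Qed.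

Lemma n_kd_bounds (R : realType) (k d m0 : nat) (U : R) :
  has_family R k d m0 -> (forall m, has_family R k d m -> m%:R <= U) ->
  m0%:R <= n_kd R k d <= U.
Proof.
move=> fam0 le_U; set S := [set (m%:R : R) | m in [set m | has_family R k d m]].
have ubS : ubound S U by move=> _ [m fam <-]; exact: le_U.
have S_m0 : S m0%:R by exists m0.
apply/andP; split; first by apply: ub_le_sup => //; exists U.
by apply: ge_sup => //; exists m0%:R.
Qed.

Theorem theorem2 (R : realType) (s : nat) (hs : (0 < s)%N) :
  (* upper bound: every family of pairwise (d-s)-neighborly boxes is small *)
  (forall d : nat, (0 < d)%N -> (2 * s <= d)%N ->
     forall m : nat, has_family R (d - s) d m ->
       (m%:R : R) <= (1 / 2 + 1 / 2 ^+ s.+1) * 2 ^+ d) /\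
  (* lower bound, with an o(2^d) error term (d -> oo, s fixed) *)
  (exists f : nat -> R,
     (fun d => f d / 2 ^+ d) @ \oo --> (0 : R) /\
     forall d : nat, (0 < d)%N -> (2 * s <= d)%N ->
       exists m : nat, has_family R (d - s) d m /\
         (1 / 2 + 1 / 2 ^+ s.+1) * 2 ^+ d - f d <= (m%:R : R)) /\
  (* the limit *)
  (fun d => n_kd R (d - s) d / 2 ^+ d) @ \oo --> ((2 ^+ s + 1) / 2 ^+ s.+1 : R).
Proof.
have upper d : (2 * s <= d)%N ->
    forall m, has_family R (d - s) d m -> m%:R <= density R s * 2 ^+ d.
  by move=> sd m; apply: has_family_size_le; lia.
have lower d : (2 * s <= d)%N -> has_family R (d - s) d (code_count s (d - s)).
  by move=> sd; have := @has_family_codes s (d - s) R; rewrite subnKC; [apply|]; lia.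
split; first by move=> d _ sd; exact: upper.
split.
  exists (lower_error R s); split; first exact: lower_error_cvg0.
  move=> d _ sd; exists (code_count s (d - s)); split; first exact: lower.
  by rewrite /lower_error opprB addrC subrK.
have -> : (2 ^+ s + 1) / 2 ^+ s.+1 = density R s.
  by rewrite /density exprS; field; rewrite expf_neq0.
apply: (@squeeze_cvgr _ _ _ _ (fun d => density R s - lower_error R s d / 2 ^+ d)
  (fun=> density R s)); last 2 first.
- by rewrite -[X in _ --> X]subr0; apply: cvgB; [exact: cvg_cst|exact: lower_error_cvg0].
- exact: cvg_cst.
exists (2 * s)%N => // d /= sd.
have /andP[count_le le_upper] := n_kd_bounds (lower d sd) (upper d sd).
have -> : density R s - lower_error R s d / 2 ^+ d = (code_count s (d - s))%:R / 2 ^+ d.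
  by rewrite /lower_error; field; rewrite expf_neq0.
have Q_gt0 : 0 < 2 ^+ d :> R by rewrite exprn_gt0.
by rewrite ler_pM2r ?invr_gt0 // count_le ler_pdivrMr.
Qed.
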